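(* In the setting described in the context, $A^3A^*-[3]_qA^2A^*A+[3]_qAA^*A^2-A^*A^3=0$, $A^{*3}A-[3]_qA^{*2}AA^*+[3]_qA^*AA^{*2}-AA^{*3}=0$, $B^3B^*-[3]_qB^2B^*B+[3]_qBB^*B^2-B^*B^3=0$, $B^{*3}B-[3]_qB^{*2}BB^*+[3]_qB^*BB^{*2}-BB^{*3}=0$.
   Context: $\mathbb K$ is an algebraically closed field, $q\in\mathbb K$ nonzero and not a root of unity, $[3]_q=\frac{q^3-q^{-3}}{q-q^{-1}}$, $V$ a nonzero finite-dimensional $\mathbb K$-vector space. A tridiagonal pair on $V$ is an ordered pair $A,A^*$ of linear maps $V\to V$ such that: (i) each of $A,A^*$ is diagonalizable; (ii) there is an ordering $V_0,\dots,V_d$ of the eigenspaces of $A$ with $A^*V_i\subseteq V_{i-1}+V_i+V_{i+1}$ ($V_{-1}=V_{d+1}=0$); (iii) there is an ordering $V^*_0,\dots,V^*_\delta$ of the eigenspaces of $A^*$ with $AV^*_i\subseteq V^*_{i-1}+V^*_i+V^*_{i+1}$ ($V^*_{-1}=V^*_{\delta+1}=0$); (iv) no subspace $W\ne0,V$ satisfies $AW\subseteq W$, $A^*W\subseteq W$. It is known $d=\delta$; orderings as in (ii),(iii) are called standard. Setting: $A,A^*$ is a tridiagonal pair on $V$; $V_0,\dots,V_d$ (resp. $V^*_0,\dots,V^*_d$) is a standard ordering of the eigenspaces of $A$ (resp. $A^*$); the eigenvalue of $A$ on $V_i$ is $aq^{2i-d}$ and that of $A^*$ on $V^*_i$ is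 $a^*q^{d-2i}$ for some nonzero $a,a^*\in\mathbb K$; $b,b^*\in\mathbb K$ are nonzero. For $0\le i\le d$ the subspaces $(V^*_0+\cdots+V^*_i)\cap(V_0+\cdots+V_{d-i})$ form a decomposition of $V$ (nonzero, direct sum equal to $V$), as do the subspaces $(V^*_{d-i}+\cdots+V^*_d)\cap(V_i+\cdots+V_d)$. $B$ is the linear map acting as $bq^{2i-d}I$ on $(V^*_0+\cdots+V^*_i)\cap(V_0+\cdots+V_{d-i})$, and $B^*$ is the linear map acting as $b^*q^{d-2i}I$ on $(V^*_{d-i}+\cdots+V^*_d)\cap(V_i+\cdots+V_d)$, for each $i$. *)

From HB Require Import structures.
From mathcomp Require Import all_boot all_order all_algebra.
Set Implicit Arguments. Unset Strict Implicit. Unset Printing Implicit Defensive.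
Import Order.TTheory GRing.Theory Num.Theory.
Local Open Scope ring_scope.
Local Open Scope vspace_scope.

Section TD.
Variables (K : fieldType) (V : vectType K).

Definition diagonalizable (f : 'End(V)) : Prop :=
  exists s : seq K, (\sum_(x <- s) passmx.leigenspace f x)%VS = fullv.

(* the i-th subspace of an ordering th_0,...,th_d of eigenvalues of f,
   with the convention V_i = 0 for i > d *)
Definition esp (f : 'End(V)) (d : nat) (th : nat -> K) (i : nat) : {vspace V} :=
  if (i <= d)%N then passmx.leigenspace f (th i) else 0%VS.

(* For i = 0 the
   term i.-1 = 0 gives V_0 again, which is harmless. *)
Definition standard_ordering (f g : 'End(V)) (d : nat) (th : nat -> K) : Prop :=
  [/\ (forall i j, (i <= d)%N -> (j <= d)%N -> th i = th j -> i = j),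
      (forall i, (i <= d)%N -> passmx.leigenspace f (th i) != 0%VS),
      (forall x, passmx.leigenspace f x != 0%VS -> exists2 i, (i <= d)%N & x = th i) &
      (forall i, (i <= d)%N ->
         (g @: esp f d th i <=
            esp f d th i.-1 + esp f d th i + esp f d th i.+1)%VS)].

Definition tridiagonal_pair (A As : 'End(V)) : Prop :=
  [/\ diagonalizable A, diagonalizable As,
      (exists d th, standard_ordering A As d th),
      (exists d th, standard_ordering As A d th) &
      (forall W : {vspace V}, (A @: W <= W)%VS -> (As @: W <= W)%VS ->
          W = 0%VS \/ W = fullv)].

Definition qint3 (q : K) : K := (q ^+ 3 - q ^- 3) / (q - q^-1).

Definition qserre (q : K) (X Y : 'End(V)) : 'End(V) :=
  (X \o X \o X \o Y)%VF - qint3 q *: (X \o X \o Y \o X)%VF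
  + qint3 q *: (X \o Y \o X \o X)%VF - (Y \o X \o X \o X)%VF.

End TD.

(* Serre relations from a tridiagonal action: if X acts on the pieces W_0, ..., W_d of a
   decomposition of V by scalars th_i with th_(i+1) = r th_i, and Y maps W_i into
   W_(i-1) + W_i + W_(i+1), then on W_i the q-Serre expression is p(X) Y with
   p(t) = (t - th_i)(t - r th_i)(t - r^-1 th_i), which kills Y W_i; for r = q^2 or q^-2
   this p is the cubic with middle coefficients [3]_q = q^2 + 1 + q^-2.
   For A, As the hypothesis is the standard ordering itself.  For B, Bs one first
   reads off from the flags defining U_i that A - a q^(d-2i) maps U_i into U_(i+1),
   giving the q-Weyl relation B A - q^2 A B = (1 - q^2) a b, and similarly for the
   other three pairs.  Such a relation forces B to map the A-eigenspace V_j into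
   V_j + V_(j-1), so B lowers both flags whose intersections are the Ud_i; since
   adjacent Ud_i are independent, B maps Ud_i into Ud_(i-1) + Ud_i + Ud_(i+1).
   Symmetrically Bs acts tridiagonally on the U_i. *)

From Pilot Require Import Defs.
From HB Require Import structures.
From mathcomp Require Import all_boot all_order all_algebra.
From mathcomp Require Import ring zify.
Set Implicit Arguments. Unset Strict Implicit. Unset Printing Implicit Defensive.
Import Order.TTheory GRing.Theory Num.Theory.
Local Open Scope ring_scope.
Import passmx.

Section IntervalSums.
Variables (K : fieldType) (V : vectType K).
Implicit Types (W : nat -> {vspace V}) (U : {vspace V}) (X Y Z : 'End(V)).

Lemma sumv_nat_sub W l h l' h' : (l' <= l)%N -> (h <= h')%N ->
  (\sum_(l <= j < h) W j <= \sum_(l' <= j < h') W j)%VS.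
Proof. exact: (le_big_nat (le := @subsetv K V) (@subvv _ _) (@addvSl _ _)). Qed.

Lemma sumv_nat_sup W l h j : (l <= j < h)%N -> (W j <= \sum_(l <= i < h) W i)%VS.
Proof.
case/andP=> lj jh; rewrite (big_cat_nat lj (ltnW jh)) (big_ltn jh) /=.
by rewrite addvC -addvA addvSl.
Qed.

Lemma subv_sumv_natP W l h U :
  reflect (forall j, (l <= j < h)%N -> (W j <= U)%VS)
          (\sum_(l <= j < h) W j <= U)%VS.
Proof.
apply: (iffP idP) => [sWU j hj | sWU].
  exact: subv_trans (sumv_nat_sup W hj) sWU.
rewrite big_nat_cond; apply: (big_ind (fun S => S <= U)%VS) => [|S T|j].
- exact: sub0v.
- by move=> sSU sTU; rewrite subv_add sSU.
- by rewrite andbT => /sWU.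
Qed.

Lemma addv_tri_sub_sumv W i :
  (W i.-1 + W i + W i.+1 <= \sum_(i.-1 <= j < i.+2) W j)%VS.
Proof. by rewrite !subv_add !sumv_nat_sup //; case: i => [|i]; lia. Qed.

Lemma limg_sumv_band Z W s t l h :
  (forall j, (l <= j < h)%N -> Z @: W j <= \sum_(j - s <= i < (j + t).+1) W i)%VS ->
  (Z @: (\sum_(l <= j < h) W j) <= \sum_(l - s <= i < h + t) W i)%VS.
Proof.
move=> ZW; rewrite limg_sum; apply/subv_sumv_natP => j /andP[lj jh].
apply: subv_trans (ZW j _) _; first by rewrite lj.
by apply: sumv_nat_sub; lia.
Qed.

Lemma limg_sumv_tridiag Z W l h :
  (forall j, Z @: W j <= W j.-1 + W j + W j.+1)%VS ->
  (Z @: (\sum_(l <= j < h) W j) <= \sum_(l.-1 <= i < h.+1) W i)%VS.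
Proof.
move=> ZW; apply: subv_trans (limg_sumv_band (s := 1) (t := 1) _) _.
  move=> j _; apply: subv_trans (ZW j) _.
  by apply: subv_trans (addv_tri_sub_sumv _ _) _; apply: sumv_nat_sub; lia.
by apply: sumv_nat_sub; lia.
Qed.

Lemma limg_sumv_raise Z W l h :
  (forall j, Z @: W j <= W j + W j.+1)%VS ->
  (Z @: (\sum_(l <= j < h) W j) <= \sum_(l <= i < h.+1) W i)%VS.
Proof.
move=> ZW; apply: subv_trans (limg_sumv_band (s := 0) (t := 1) _) _.
  by move=> j _; apply: subv_trans (ZW j) _; rewrite subv_add !sumv_nat_sup //; lia.
by apply: sumv_nat_sub; lia.
Qed.

Lemma limg_sumv_lower Z W l h :
  (forall j, Z @: W j <= W j + W j.-1)%VS ->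
  (Z @: (\sum_(l <= j < h) W j) <= \sum_(l.-1 <= i < h) W i)%VS.
Proof.
move=> ZW; apply: subv_trans (limg_sumv_band (s := 1) (t := 0) _) _.
  by move=> j _; apply: subv_trans (ZW j) _; rewrite subv_add !sumv_nat_sup //; lia.
by apply: sumv_nat_sub; lia.
Qed.

Lemma limg_sumv_stable Z W l h :
  (forall j, Z @: W j <= W j)%VS ->
  (Z @: (\sum_(l <= j < h) W j) <= \sum_(l <= j < h) W j)%VS.
Proof.
move=> ZW; rewrite limg_sum; apply/subv_sumv_natP => j hj.
exact: subv_trans (ZW j) (sumv_nat_sup W hj).
Qed.

End IntervalSums.

Section Eigen.
Variables (K : fieldType) (V : vectType K).
Implicit Types (W : nat -> {vspace V}) (U : {vspace V}) (X Y Z : 'End(V)).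

Lemma sub_scale1_lfunE X c v : (X - c *: \1)%VF v = X v - c *: v.
Proof. by rewrite !(add_lfunE, opp_lfunE, scale_lfunE, id_lfunE). Qed.

Lemma leigenspaceP X x v : reflect (X v = x *: v) (v \in leigenspace X x).
Proof. by rewrite memv_ker sub_scale1_lfunE subr_eq0; apply: eqP. Qed.

Lemma subv_leigenspaceP X x U :
  reflect (forall v, v \in U -> X v = x *: v) (U <= leigenspace X x)%VS.
Proof.
apply: (iffP subvP) => [sU v /sU /leigenspaceP // | XU v /XU /leigenspaceP //].
Qed.

Lemma limg_leigenspace_sub X x c U : (U <= leigenspace X x)%VS ->
  ((X - c *: \1) @: U <= U)%VS.
Proof.
move/subv_leigenspaceP=> XU; apply/subvP=> _ /memv_imgP[v Uv ->].
by rewrite sub_scale1_lfunE XU // -scalerBl memvZ.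
Qed.

Lemma limg_sub_scale1 X c U : ((X - c *: \1) @: U <= X @: U + U)%VS.
Proof.
apply/subvP=> _ /memv_imgP[v Uv ->].
by rewrite sub_scale1_lfunE memv_add ?memv_img ?memvN ?memvZ.
Qed.

Lemma limg_leigenspace_eq0 {X x U} : (U <= leigenspace X x)%VS ->
  ((X - x *: \1) @: U = 0)%VS.
Proof. by rewrite /leigenspace lkerE => /eqP. Qed.

Lemma limg_sumv_eig_low X W (th : nat -> K) l h :
  (forall j, W j <= leigenspace X (th j))%VS ->
  ((X - th l *: \1) @: (\sum_(l <= j < h) W j) <= \sum_(l.+1 <= j < h) W j)%VS.
Proof.
move=> XW; have [lh | hl] := ltnP l h; last by rewrite big_geq // limg0 sub0v.
rewrite big_ltn // limgD (limg_leigenspace_eq0 (XW l)) add0v.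
by rewrite limg_sumv_stable // => j; apply: limg_leigenspace_sub.
Qed.

Lemma limg_sumv_eig_high X W (th : nat -> K) l h :
  (forall j, W j <= leigenspace X (th j))%VS ->
  ((X - th h *: \1) @: (\sum_(l <= j < h.+1) W j) <= \sum_(l <= j < h) W j)%VS.
Proof.
move=> XW; have [lh | hl] := leqP l h; last by rewrite big_geq // limg0 sub0v.
rewrite big_nat_recr //= limgD (limg_leigenspace_eq0 (XW h)) addv0.
by rewrite limg_sumv_stable // => j; apply: limg_leigenspace_sub.
Qed.

Lemma lfun_sumv_ext {T : nat -> {vspace V}} {n} {f g : 'End(V)} :
  (\sum_(i < n) T i)%VS = fullv -> (forall i, (i < n)%N -> {in T i, f =1 g}) ->
  f = g.
Proof.
move=> Tfull fg; apply/lfunP => v; have := memvf v.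
rewrite -Tfull => /memv_sumP[vs Tvs ->]; rewrite !linear_sum.
by apply: eq_bigr => i _; apply: fg (ltn_ord i) _ (Tvs i isT).
Qed.

Lemma serre_of_tridiag X Y W (th : nat -> K) r k d :
  (\sum_(i < d.+1) W i)%VS = fullv ->
  (forall i, (i <= d)%N -> W i <= leigenspace X (th i))%VS ->
  (forall i, th i.+1 = r * th i) ->
  r ^+ 3 - k * r ^+ 2 + k * r - 1 = 0 ->
  (forall i, (i <= d)%N -> Y @: W i <= \sum_(i.-1 <= j < minn i.+2 d.+1) W j)%VS ->
  (X \o X \o X \o Y)%VF - k *: (X \o X \o Y \o X)%VF
    + k *: (X \o Y \o X \o X)%VF - (Y \o X \o X \o X)%VF = 0.
Proof.
move=> Wfull XW thS r_root YW; apply: (lfun_sumv_ext Wfull) => i hi u Wu.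
have {}hi : (i <= d)%N by [].
set l := th i; have Xu : X u = l *: u by move/subv_leigenspaceP: (XW i hi); apply.
pose P := (X \o X \o X - (k * l) *: (X \o X) + (k * l ^+ 2) *: X - l ^+ 3 *: \1)%VF.
have PE m w : X w = m *: w ->
    P w = (m ^+ 3 - k * l * m ^+ 2 + k * l ^+ 2 * m - l ^+ 3) *: w.
  move=> Xw; rewrite !(add_lfunE, opp_lfunE, scale_lfunE, comp_lfunE, id_lfunE).
  rewrite Xw !linearZ /= Xw !linearZ /= Xw !scalerA !scalerN -!scaleNr -!scalerDl.
  by congr (_ *: _); ring.
(* The cubic vanishes at l and at its two neighbours r * l and r^-1 * l. *)
have P0 j : (i.-1 <= j < minn i.+2 d.+1)%N -> (W j <= lker P)%VS.
  move=> hj; have jd : (j <= d)%N by lia.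
  apply/subvP => w /(subvP (XW j jd)) /leigenspaceP Xw; rewrite memv_ker (PE _ _ Xw).
  have [->|[->|ij]] : j = i \/ j = i.+1 \/ i = j.+1 by lia.
  - by rewrite -/l (_ : _ - _ = 0) ?scale0r //; ring.
  - rewrite thS -/l (_ : _ - _ = l ^+ 3 * (r ^+ 3 - k * r ^+ 2 + k * r - 1)).
      by rewrite r_root mulr0 scale0r.
    by ring.
  - rewrite /l ij thS (_ : _ - _ = - th j ^+ 3 * (r ^+ 3 - k * r ^+ 2 + k * r - 1)).
      by rewrite r_root mulr0 scale0r.
    by ring.
have YuP : Y u \in lker P.
  apply: subvP (memv_img Y Wu); apply: subv_trans (YW i hi) _.
  exact/subv_sumv_natP.
move: YuP; rewrite memv_ker zero_lfunE => /eqP <-.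
rewrite !(add_lfunE, opp_lfunE, scale_lfunE, comp_lfunE, id_lfunE) Xu !linearZ /= Xu.
rewrite !linearZ /= Xu !linearZ /= !scalerA; congr (_ + _ + _ + _); congr (_ *: _); ring.
Qed.

Lemma qweyl_of_eigen_shift X Z (T : nat -> {vspace V}) d rho c (al mu : nat -> K) :
  (\sum_(i < d.+1) T i)%VS = fullv ->
  (forall i, (i <= d)%N -> T i <= leigenspace Z (mu i))%VS ->
  (forall i, (i <= d)%N -> (X - al i *: \1) @: T i <= leigenspace Z (rho * mu i))%VS ->
  (forall i, (i <= d)%N -> al i * mu i = c) ->
  (Z \o X = rho *: (X \o Z) + ((1 - rho) * c) *: \1)%VF.
Proof.
move=> Tfull ZT XT almu; apply: (lfun_sumv_ext Tfull) => i hi u Tu.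
have {}hi : (i <= d)%N by [].
have /subv_leigenspaceP Zu := ZT i hi.
set w := (X - al i *: \1)%VF u.
have /leigenspaceP Zw : w \in leigenspace Z (rho * mu i).
  exact: subvP (XT i hi) _ (memv_img _ Tu).
have Xu : X u = al i *: u + w by rewrite /w sub_scale1_lfunE addrC subrK.
rewrite !(add_lfunE, scale_lfunE, comp_lfunE, id_lfunE) Xu linearD linearZ /=.
rewrite (Zu u Tu) Zw !linearZ /= Xu -(almu i hi) !scalerDr !scalerA addrAC -scalerDl.
by congr (_ + _); congr (_ *: _); ring.
Qed.

Lemma limg_leigenspace_qweyl X Z rho c x : rho != 0 -> x != 0 ->
  (Z \o X = rho *: (X \o Z) + ((1 - rho) * c) *: \1)%VF ->
  (Z @: leigenspace X x <= leigenspace X x + leigenspace X (rho^-1 * x))%VS.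
Proof.
move=> rho0 x0 ZX; apply/subvP => _ /memv_imgP[v /leigenspaceP Xv ->].
move/lfunP/(_ v): ZX.
rewrite !(add_lfunE, scale_lfunE, comp_lfunE, id_lfunE) Xv linearZ /= => ZXv.
have XZv : X (Z v) = rho^-1 *: (x *: Z v - ((1 - rho) * c) *: v).
  by rewrite ZXv addrK scalerA mulVf // scale1r.
(* [Z v - (c / x) v] is the eigenvector for the shifted eigenvalue. *)
rewrite -(subrK ((c / x) *: v) (Z v)) addrC memv_add ?memvZ //.
  by apply/leigenspaceP.
apply/leigenspaceP; rewrite linearB linearZ /= XZv Xv !scalerBr !scalerA.
rewrite -!addrA; congr (_ + _); rewrite -!scaleNr -scalerDl; congr (_ *: _).
by field; apply/andP.
Qed.

End Eigen.

Lemma directv_capv_succ (K : fieldType) (V : vectType K) (S : nat -> {vspace V}) d :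
  directv (\sum_(i < d.+1) S i) -> forall i, (i < d)%N -> (S i :&: S i.+1 = 0)%VS.
Proof.
move/directv_sumP => Sdir i lt_id.
apply/eqP; rewrite -subv0 -(Sdir (Ordinal (leqW lt_id)) isT) capvS //.
by apply: (sumv_sup (Ordinal (lt_id : i.+1 < d.+1)%N)) => //=; rewrite -val_eqE /= gtn_eqF.
Qed.

Section SplitDecomposition.
Variables (K : fieldType) (V : vectType K).
Variables (F H : nat -> {vspace V}) (d : nat).
Local Notation S i := (F i :&: H i)%VS.
Hypotheses (F_mono : forall i, (F i <= F i.+1)%VS) (H_anti : forall i, (H i.+1 <= H i)%VS)
  (S_adj : forall i, (i < d)%N -> (S i :&: S i.+1 = 0)%VS).

Let F_le {m n} : (m <= n)%N -> (F m <= F n)%VS.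
Proof. exact: (homo_leq (@subvv _ _) (@subv_trans _ _) F_mono). Qed.

Let H_ge {m n} : (m <= n)%N -> (H n <= H m)%VS.
Proof.
apply: (homo_leq (r := fun U W => W <= U)%VS (@subvv _ _) _ H_anti).
by move=> U1 U2 U3 U21 U32; apply: subv_trans U32 U21.
Qed.

Let S_adj0 i s : (i < d)%N -> s \in S i -> s \in S i.+1 -> s = 0.
Proof. by move=> lt_id Ss Ss'; apply/eqP; rewrite -memv0 -(S_adj lt_id) memv_cap Ss. Qed.

Lemma capv_sumv_top_step k l h : (k < h < d.+1)%N ->
  (F k :&: \sum_(l <= m < h.+1) S m <= \sum_(l <= m < h) S m)%VS.
Proof.
case/andP=> kh hd; have [lh | hl] := leqP l h; last by rewrite big_geq // capv0 sub0v.
apply/subvP => x /memv_capP[Fx]; rewrite big_nat_recr //= => /memv_addP[y Sy [s Ss xE]].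
have Fy : y \in F h.-1.
  apply: subvP Sy; apply/subv_sumv_natP => m /andP[_ mh].
  by apply: subv_trans (capvSl _ _) (F_le _); lia.
have Fs : s \in F h.-1.
  have -> : s = x - y by rewrite xE addrC addKr.
  have Fkh : (F k <= F h.-1)%VS by apply: F_le; lia.
  by apply: memvB => //; apply: (subvP Fkh).
have Hs : s \in H h.-1 by apply: subvP (H_ge (leq_pred h)) _ (subvP (capvSr _ _) _ Ss).
have s0 : s = 0.
  by apply: (@S_adj0 h.-1); [lia | rewrite memv_cap Fs Hs | rewrite prednK //; lia].
by rewrite xE s0 addr0.
Qed.

Lemma capv_sumv_bot_step k h : (k < d)%N ->
  (H k.+1 :&: \sum_(k <= m < h) S m <= \sum_(k.+1 <= m < h) S m)%VS.
Proof.
move=> kd; have [kh | hk] := ltnP k h; last by rewrite big_geq // capv0 sub0v.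
apply/subvP => x /memv_capP[Hx]; rewrite big_ltn //= => /memv_addP[s Ss [y Sy xE]].
have Hy : y \in H k.+1.
  apply: subvP Sy; apply/subv_sumv_natP => m /andP[km _].
  exact: subv_trans (capvSr _ _) (H_ge km).
have Hs : s \in H k.+1.
  have -> : s = x - y by rewrite xE addrK.
  exact: memvB.
have Fs : s \in F k.+1 by apply: subvP (F_mono k) _ (subvP (capvSl _ _) _ Ss).
have s0 : s = 0 by apply: (@S_adj0 k) => //; rewrite memv_cap Fs Hs.
by rewrite xE s0 add0r.
Qed.

Lemma capv_sumv_top k l h : (k < h <= d.+1)%N ->
  (F k :&: \sum_(l <= m < h) S m <= \sum_(l <= m < k.+1) S m)%VS.
Proof.
elim: h => [//|h IH] /andP[kh hd].
have [<- | kh'] := eqVneq k h; first exact: capvSr.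
have IHh : (F k :&: \sum_(l <= m < h) S m <= \sum_(l <= m < k.+1) S m)%VS.
  by apply: IH; lia.
apply: subv_trans IHh; rewrite subv_cap capvSl capv_sumv_top_step //; lia.
Qed.

Lemma capv_sumv_bot k l h : (l <= k <= d)%N ->
  (H k :&: \sum_(l <= m < h) S m <= \sum_(k <= m < h) S m)%VS.
Proof.
elim: k => [|k IH] /andP[lk kd]; first by rewrite (_ : l = 0)%N ?capvSr //; lia.
have [<- | lk'] := eqVneq l k.+1; first exact: capvSr.
have IHk : (H k :&: \sum_(l <= m < h) S m <= \sum_(k <= m < h) S m)%VS.
  by apply: IH; lia.
apply: subv_trans (capv_sumv_bot_step (k := k) h _); last by lia.
by rewrite subv_cap capvSl (subv_trans _ IHk) // capvS ?H_anti.
Qed.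

Lemma limg_split_tridiag Z : (\sum_(i < d.+1) S i)%VS = fullv ->
  (forall i, (i <= d)%N -> Z @: F i <= F i.+1)%VS ->
  (forall i, (i <= d)%N -> Z @: H i <= H i.-1)%VS ->
  forall i, (i <= d)%N -> (Z @: S i <= \sum_(i.-1 <= m < minn i.+2 d.+1) S m)%VS.
Proof.
move=> Sfull ZF ZH i id.
have ZS : (Z @: S i <= F i.+1 :&: H i.-1)%VS.
  exact: subv_trans (limg_cap _ _ _) (capvS (ZF i id) (ZH i id)).
have FS : (F i.+1 <= \sum_(0 <= m < minn i.+2 d.+1) S m)%VS.
  have Sfull' : (\sum_(0 <= m < d.+1) S m)%VS = fullv by rewrite big_mkord.
  rewrite -[F i.+1]capvf -Sfull'.
  have [lt_id | ge_id] := ltnP i d.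
    by rewrite (minn_idPl _) ?capv_sumv_top //; lia.
  by rewrite (minn_idPr _) ?capvSr //; lia.
have HS : (H i.-1 :&: \sum_(0 <= m < minn i.+2 d.+1) S m
           <= \sum_(i.-1 <= m < minn i.+2 d.+1) S m)%VS.
  by apply: capv_sumv_bot; lia.
apply: subv_trans HS.
by rewrite subv_cap (subv_trans ZS (capvSr _ _)) (subv_trans ZS (subv_trans (capvSl _ _) FS)).
Qed.

End SplitDecomposition.

Section EigenspaceOrdering.
Variables (K : fieldType) (V : vectType K) (f g : 'End(V)) (d : nat) (th : nat -> K).
Local Notation E := (esp f d th).

Lemma esp_beyond i : (d < i)%N -> E i = 0%VS.
Proof. by rewrite /esp ltnNge => /negbTE->. Qed.

Lemma esp_sub_leigenspace i : (E i <= leigenspace f (th i))%VS.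
Proof. by rewrite /esp; case: ifP => _; rewrite ?subvv ?sub0v. Qed.

Lemma sumv_esp_sub l h l' h' : (l' <= l)%N -> (minn h d.+1 <= h')%N ->
  (\sum_(l <= j < h) E j <= \sum_(l' <= j < h') E j)%VS.
Proof.
move=> ll hh; apply/subv_sumv_natP => j /andP[lj jh].
have [jd | dj] := leqP j d; last by rewrite esp_beyond ?sub0v.
by apply: sumv_nat_sup; lia.
Qed.

Hypothesis g_tridiag : standard_ordering f g d th.

Lemma esp_sub_leigenspace_shift x k :
  (forall j, (j <= d)%N -> th j = x -> j = k) -> (leigenspace f x <= E k)%VS.
Proof.
move=> th_k; case: g_tridiag => _ _ th_onto _.
have [->|nz] := eqVneq (leigenspace f x) 0%VS; first exact: sub0v.
have [j jd xE] := th_onto x nz.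
by rewrite /esp -(th_k j jd (esym xE)) jd -xE subvv.
Qed.

Lemma esp_tridiag i : (g @: E i <= E i.-1 + E i + E i.+1)%VS.
Proof.
have [id | di] := leqP i d; first by case: g_tridiag => _ _ _; apply.
by rewrite esp_beyond // limg0 sub0v.
Qed.

Lemma esp_tridiag_sub_scale1 c i :
  ((g - c *: \1) @: E i <= E i.-1 + E i + E i.+1)%VS.
Proof.
apply: subv_trans (limg_sub_scale1 _ _ _) _.
by rewrite subv_add esp_tridiag (subv_trans (addvSr (E i.-1) _) (addvSl _ _)).
Qed.

Lemma esp_tridiag_sumv i :
  (g @: E i <= \sum_(i.-1 <= j < minn i.+2 d.+1) E j)%VS.
Proof.
apply: subv_trans (esp_tridiag i) _; apply: subv_trans (addv_tri_sub_sumv E i) _.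
by apply: sumv_esp_sub.
Qed.

Lemma sumv_esp_full : Defs.diagonalizable f -> (\sum_(i < d.+1) E i)%VS = fullv.
Proof.
case=> s sfull; apply/eqP; rewrite eqEsubv subvf /= -sfull.
elim: s {sfull} => [|x s IH]; first by rewrite big_nil sub0v.
rewrite big_cons subv_add IH andbT.
have [->|nz] := eqVneq (leigenspace f x) 0%VS; first exact: sub0v.
case: g_tridiag => _ _ th_onto _; have [j jd ->] := th_onto x nz.
by apply: (sumv_sup (Ordinal (jd : j < d.+1)%N)) => //=; rewrite /esp jd.
Qed.

Lemma limg_esp_qweyl Z rho c j k : rho != 0 -> th j != 0 ->
  (Z \o f = rho *: (f \o Z) + ((1 - rho) * c) *: \1)%VF ->
  (forall m, (m <= d)%N -> th m = rho^-1 * th j -> m = k) ->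
  (Z @: E j <= E j + E k)%VS.
Proof.
move=> rho0 thj0 Zf th_k; have [jd | dj] := leqP j d; last first.
  by rewrite esp_beyond // limg0 sub0v.
rewrite {1 2}/esp jd; apply: subv_trans (limg_leigenspace_qweyl rho0 thj0 Zf) _.
by apply: addvS; [exact: subvv | exact: esp_sub_leigenspace_shift].
Qed.

End EigenspaceOrdering.

Section NotRootOfUnity.
Variables (K : fieldType) (q : K).
Hypotheses (q_neq0 : q != 0) (q_not_root : forall n, (0 < n)%N -> q ^+ n != 1).

Lemma expfz_eq1 (m : int) : q ^ m = 1 -> m = 0.
Proof.
case: m => n; rewrite -?exprnP => qn1.
  by case: n qn1 => // n /eqP; rewrite (negbTE (q_not_root _)).
by move/eqP: qn1; rewrite invr_eq1 (negbTE (q_not_root _)).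
Qed.

Lemma expfz_inj (m n : int) : q ^ m = q ^ n -> m = n.
Proof.
move=> qmn; apply/eqP; rewrite -subr_eq0; apply/eqP/expfz_eq1.
by rewrite expfzDr // qmn -expfzDr // subrr.
Qed.

Lemma mulr_expfz_inj (c : K) (m n : int) : c != 0 -> c * q ^ m = c * q ^ n -> m = n.
Proof. by move=> c0 /(mulfI c0) /expfz_inj. Qed.

Lemma qint3_root r : r = q ^ 2 \/ r = q ^ (-2) ->
  r ^+ 3 - qint3 q * r ^+ 2 + qint3 q * r - 1 = 0.
Proof.
have q2 : q ^+ 2 != 1 by apply: q_not_root.
have qq : q - q^-1 != 0.
  by apply: contra q2; rewrite subr_eq0 expr2 => /eqP {1}->; rewrite mulVf.
rewrite /qint3 -invr_expz; case=> ->; field; by rewrite q_neq0 subr_eq0 -expr2 q2.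
Qed.

End NotRootOfUnity.

Section TDPair.
Variables (K : fieldType) (V : vectType K) (q : K) (A As B Bs : 'End(V)) (d : nat).
Variables (a as_ b bs : K) (th ths : nat -> K).
Hypotheses (q_neq0 : q != 0) (q_not_root : forall n, (0 < n)%N -> q ^+ n != 1).
Hypotheses (thE : forall i, th i = a * q ^ ((2 * i)%:Z - d%:Z))
  (thsE : forall i, ths i = as_ * q ^ (d%:Z - (2 * i)%:Z)).
Hypotheses (A_ord : standard_ordering A As d th) (As_ord : standard_ordering As A d ths).

Local Notation Vi := (esp A d th).
Local Notation Vsi := (esp As d ths).
Local Notation V_upto i := (\sum_(0 <= j < i.+1) Vi j)%VS.
Local Notation Vs_upto i := (\sum_(0 <= j < i.+1) Vsi j)%VS.
Local Notation V_from i := (\sum_(i <= j < d.+1) Vi j)%VS.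
Local Notation Vs_from i := (\sum_(i <= j < d.+1) Vsi j)%VS.
Local Notation U i := (Vs_upto i :&: V_upto (d - i))%VS.
Local Notation Ud i := (Vs_from (d - i) :&: V_from i)%VS.

Lemma mulr_qexp_shift (c : K) (m n z : int) : n = z + m -> c * q ^ n = q ^ z * (c * q ^ m).
Proof. by move=> ->; rewrite mulrCA -expfzDr. Qed.

Lemma qserre_A_As : Defs.diagonalizable A -> qserre q A As = 0.
Proof.
move=> A_diag; apply: (serre_of_tridiag (r := q ^ 2) (sumv_esp_full A_ord A_diag)).
- by move=> i _; apply: esp_sub_leigenspace.
- by move=> i; rewrite !thE; apply: mulr_qexp_shift; lia.
- exact: qint3_root (or_introl erefl).
- by move=> i _; apply: esp_tridiag_sumv.
Qed.

Lemma qserre_As_A : Defs.diagonalizable As -> qserre q As A = 0.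
Proof.
move=> As_diag; apply: (serre_of_tridiag (r := q ^ (-2)) (sumv_esp_full As_ord As_diag)).
- by move=> i _; apply: esp_sub_leigenspace.
- by move=> i; rewrite !thsE; apply: mulr_qexp_shift; lia.
- exact: qint3_root (or_intror erefl).
- by move=> i _; apply: esp_tridiag_sumv.
Qed.

Hypotheses (a_neq0 : a != 0) (as_neq0 : as_ != 0).

Lemma th_neq0 j : th j != 0.
Proof. by rewrite thE mulf_neq0 ?expfz_neq0. Qed.

Lemma ths_neq0 j : ths j != 0.
Proof. by rewrite thsE mulf_neq0 ?expfz_neq0. Qed.

Lemma th_shiftE m j (z : int) : th m = q ^ z * th j -> (2 * m)%:Z = z + (2 * j)%:Z.
Proof.
rewrite !thE mulrCA -expfzDr //.
by move/(mulr_expfz_inj q_neq0 q_not_root a_neq0); lia.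
Qed.

Lemma ths_shiftE m j (z : int) : ths m = q ^ z * ths j -> (2 * j)%:Z = z + (2 * m)%:Z.
Proof.
rewrite !thsE mulrCA -expfzDr //.
by move/(mulr_expfz_inj q_neq0 q_not_root as_neq0); lia.
Qed.

Hypotheses (U_full : (\sum_(i < d.+1) U i)%VS = fullv)
  (U_dir : directv (\sum_(i < d.+1) U i))
  (Ud_full : (\sum_(i < d.+1) Ud i)%VS = fullv)
  (Ud_dir : directv (\sum_(i < d.+1) Ud i))
  (B_U : forall i v, (i <= d)%N -> v \in U i -> B v = (b * q ^ ((2 * i)%:Z - d%:Z)) *: v)
  (Bs_Ud : forall i v, (i <= d)%N -> v \in Ud i ->
     Bs v = (bs * q ^ (d%:Z - (2 * i)%:Z)) *: v).

Lemma U_eig i : (i <= d)%N -> (U i <= leigenspace B (b * q ^ ((2 * i)%:Z - d%:Z)))%VS.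
Proof. by move=> id; apply/subv_leigenspaceP => v; apply: B_U. Qed.

Lemma Ud_eig i : (i <= d)%N -> (Ud i <= leigenspace Bs (bs * q ^ (d%:Z - (2 * i)%:Z)))%VS.
Proof. by move=> id; apply/subv_leigenspaceP => v; apply: Bs_Ud. Qed.

Lemma Bs_A_qweyl :
  (Bs \o A = q ^ (-2) *: (A \o Bs) + ((1 - q ^ (-2)) * (a * bs)) *: \1)%VF.
Proof.
apply: (qweyl_of_eigen_shift (T := fun i => Ud i) (al := th) Ud_full Ud_eig).
- move=> i id; have UdS : ((A - th i *: \1) @: Ud i <= Vs_from (d - i.+1) :&: V_from i.+1)%VS.
    apply: subv_trans (limg_cap _ _ _) (capvS _ _).
      apply: subv_trans (limg_sumv_tridiag _ _ (esp_tridiag_sub_scale1 As_ord _)) _.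
      by apply: sumv_esp_sub; lia.
    exact: limg_sumv_eig_low _ _ (esp_sub_leigenspace _ _ _).
  apply: subv_trans UdS _; have [lt_id | ge_id] := ltnP i d.
    rewrite -(mulr_qexp_shift _ (_ : (d%:Z - (2 * i.+1)%:Z) = _ + _)); last by lia.
    exact: Ud_eig.
  by rewrite [X in (_ :&: X)%VS]big_geq ?capv0 ?sub0v //; lia.
- by move=> i _; rewrite thE mulrACA -expfzDr // (_ : _ + _ = 0) ?mulr1 //; lia.
Qed.

Lemma Bs_As_qweyl :
  (Bs \o As = q ^ 2 *: (As \o Bs) + ((1 - q ^ 2) * (as_ * bs)) *: \1)%VF.
Proof.
apply: (qweyl_of_eigen_shift (T := fun i => Ud i) (al := fun i => ths (d - i)) Ud_full Ud_eig).
- move=> i id.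
  have UdS : ((As - ths (d - i) *: \1) @: Ud i <= Vs_from (d - i).+1 :&: V_from i.-1)%VS.
    apply: subv_trans (limg_cap _ _ _) (capvS _ _).
      exact: limg_sumv_eig_low _ _ (esp_sub_leigenspace _ _ _).
    apply: subv_trans (limg_sumv_tridiag _ _ (esp_tridiag_sub_scale1 A_ord _)) _.
    by apply: sumv_esp_sub; lia.
  apply: subv_trans UdS _; case: i => [|i] in id *.
    by rewrite subn0 [X in (X :&: _)%VS]big_geq ?cap0v ?sub0v.
  rewrite -(mulr_qexp_shift _ (_ : (d%:Z - (2 * i)%:Z) = _ + _)); last by lia.
  apply: subv_trans (Ud_eig (ltnW id)); apply: capvS => //.
  by apply: sumv_esp_sub; lia.
- move=> i id; rewrite thsE mulrACA -expfzDr // (_ : _ + _ = 0) ?mulr1 //; lia.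
Qed.

Lemma B_A_qweyl :
  (B \o A = q ^ 2 *: (A \o B) + ((1 - q ^ 2) * (a * b)) *: \1)%VF.
Proof.
apply: (qweyl_of_eigen_shift (T := fun i => U i) (al := fun i => th (d - i)) U_full U_eig).
- move=> i id.
  have US : ((A - th (d - i) *: \1) @: U i <= Vs_upto i.+1 :&: \sum_(0 <= j < d - i) Vi j)%VS.
    apply: subv_trans (limg_cap _ _ _) (capvS _ _).
      apply: subv_trans (limg_sumv_tridiag _ _ (esp_tridiag_sub_scale1 As_ord _)) _.
      by apply: sumv_esp_sub; lia.
    exact: limg_sumv_eig_high _ _ (esp_sub_leigenspace _ _ _).
  apply: subv_trans US _; have [lt_id | ge_id] := ltnP i d.
    rewrite -(mulr_qexp_shift _ (_ : ((2 * i.+1)%:Z - d%:Z) = _ + _)); last by lia.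
    apply: subv_trans (U_eig lt_id); apply: capvS => //.
    by apply: sumv_esp_sub; lia.
  by rewrite [X in (_ :&: X)%VS]big_geq ?capv0 ?sub0v //; lia.
- move=> i id; rewrite thE mulrACA -expfzDr // (_ : _ + _ = 0) ?mulr1 //; lia.
Qed.

Lemma B_As_qweyl :
  (B \o As = q ^ (-2) *: (As \o B) + ((1 - q ^ (-2)) * (as_ * b)) *: \1)%VF.
Proof.
apply: (qweyl_of_eigen_shift (T := fun i => U i) (al := ths) U_full U_eig).
- move=> i id.
  have US : ((As - ths i *: \1) @: U i <=
             \sum_(0 <= j < i) Vsi j :&: \sum_(0 <= j < (d - i).+2) Vi j)%VS.
    apply: subv_trans (limg_cap _ _ _) (capvS _ _).
      exact: limg_sumv_eig_high _ _ (esp_sub_leigenspace _ _ _).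
    apply: subv_trans (limg_sumv_tridiag _ _ (esp_tridiag_sub_scale1 A_ord _)) _.
    by apply: sumv_esp_sub; lia.
  apply: subv_trans US _; case: i => [|i] in id *.
    by rewrite [X in (X :&: _)%VS]big_geq ?cap0v ?sub0v.
  rewrite -(mulr_qexp_shift _ (_ : ((2 * i)%:Z - d%:Z) = _ + _)); last by lia.
  apply: subv_trans (U_eig (ltnW id)); apply: capvS => //.
  by apply: sumv_esp_sub; lia.
- move=> i id; rewrite thsE mulrACA -expfzDr // (_ : _ + _ = 0) ?mulr1 //; lia.
Qed.

Lemma Bs_raises_Vi j : (Bs @: Vi j <= Vi j + Vi j.+1)%VS.
Proof.
apply: (limg_esp_qweyl A_ord (expfz_neq0 _ q_neq0) (th_neq0 j) Bs_A_qweyl) => m _.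
by rewrite invr_expz opprK => /th_shiftE; lia.
Qed.

Lemma Bs_raises_Vsi j : (Bs @: Vsi j <= Vsi j + Vsi j.+1)%VS.
Proof.
apply: (limg_esp_qweyl As_ord (expfz_neq0 _ q_neq0) (ths_neq0 j) Bs_As_qweyl) => m _.
by rewrite invr_expz => /ths_shiftE; lia.
Qed.

Lemma B_lowers_Vi j : (B @: Vi j <= Vi j + Vi j.-1)%VS.
Proof.
apply: (limg_esp_qweyl A_ord (expfz_neq0 _ q_neq0) (th_neq0 j) B_A_qweyl) => m _.
by rewrite invr_expz => /th_shiftE; lia.
Qed.

Lemma B_lowers_Vsi j : (B @: Vsi j <= Vsi j + Vsi j.-1)%VS.
Proof.
apply: (limg_esp_qweyl As_ord (expfz_neq0 _ q_neq0) (ths_neq0 j) B_As_qweyl) => m _.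
by rewrite invr_expz opprK => /ths_shiftE; lia.
Qed.

Lemma qserre_B_Bs : qserre q B Bs = 0.
Proof.
apply: (serre_of_tridiag (r := q ^ 2) U_full U_eig).
- by move=> i; apply: mulr_qexp_shift; lia.
- exact: qint3_root (or_introl erefl).
- apply: (limg_split_tridiag (F := fun i => Vs_upto i) (H := fun i => V_upto (d - i))).
  + by move=> i; apply: sumv_nat_sub.
  + by move=> i; apply: sumv_nat_sub; lia.
  + exact: directv_capv_succ U_dir.
  + exact: U_full.
  + by move=> i _; apply: limg_sumv_raise Bs_raises_Vsi.
  + move=> i id; apply: subv_trans (limg_sumv_raise _ _ Bs_raises_Vi) _.
    by apply: sumv_esp_sub; lia.
Qed.

Lemma qserre_Bs_B : qserre q Bs B = 0.
Proof.
apply: (serre_of_tridiag (r := q ^ (-2)) Ud_full Ud_eig).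
- by move=> i; apply: mulr_qexp_shift; lia.
- exact: qint3_root (or_intror erefl).
- apply: (limg_split_tridiag (F := fun i => Vs_from (d - i)) (H := fun i => V_from i)).
  + by move=> i; apply: sumv_nat_sub; lia.
  + by move=> i; apply: sumv_nat_sub.
  + exact: directv_capv_succ Ud_dir.
  + exact: Ud_full.
  + move=> i _; apply: subv_trans (limg_sumv_lower _ _ B_lowers_Vsi) _.
    by apply: sumv_esp_sub; lia.
  + by move=> i _; apply: limg_sumv_lower B_lowers_Vi.
Qed.

End TDPair.

Theorem theorem12p1 (K : closedFieldType) (q : K) (V : vectType K)
  (A As B Bs : 'End(V)) (d : nat) (a as_ b bs : K) :
  q != 0 ->
  (forall n : nat, (0 < n)%N -> q ^+ n != 1) ->
  (0 < \dim (fullv : {vspace V}))%N ->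
  tridiagonal_pair A As ->
  standard_ordering A As d (fun i => a * q ^ ((2 * i)%:Z - d%:Z)) ->
  standard_ordering As A d (fun i => as_ * q ^ (d%:Z - (2 * i)%:Z)) ->
  a != 0 -> as_ != 0 -> b != 0 -> bs != 0 ->
  let Vi := fun i => esp A d (fun i => a * q ^ ((2 * i)%:Z - d%:Z)) i in
  let Vsi := fun i => esp As d (fun i => as_ * q ^ (d%:Z - (2 * i)%:Z)) i in
  let U := fun i => ((\sum_(0 <= j < i.+1) Vsi j) :&: (\sum_(0 <= j < (d - i).+1) Vi j))%VS in
  let Ud := fun i => ((\sum_(d - i <= j < d.+1) Vsi j) :&: (\sum_(i <= j < d.+1) Vi j))%VS in
  (forall i, (i <= d)%N -> U i != 0%VS) ->
  directv (\sum_(i < d.+1) U i) -> (\sum_(i < d.+1) U i)%VS = fullv ->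
  (forall i, (i <= d)%N -> Ud i != 0%VS) ->
  directv (\sum_(i < d.+1) Ud i) -> (\sum_(i < d.+1) Ud i)%VS = fullv ->
  (forall i v, (i <= d)%N -> v \in U i -> B v = (b * q ^ ((2 * i)%:Z - d%:Z)) *: v) ->
  (forall i v, (i <= d)%N -> v \in Ud i -> Bs v = (bs * q ^ (d%:Z - (2 * i)%:Z)) *: v) ->
  [/\ qserre q A As = 0, qserre q As A = 0, qserre q B Bs = 0 & qserre q Bs B = 0].
Proof.
move=> q0 q_root _ [A_diag As_diag _ _ _] A_ord As_ord a0 as0 _ _ Vi Vsi U Ud.
move=> _ U_dir U_full _ Ud_dir Ud_full B_U Bs_Ud.
split.
- exact: qserre_A_As q0 q_root (fun=> erefl) A_ord A_diag.
- exact: qserre_As_A q0 q_root (fun=> erefl) As_ord As_diag.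
- exact: qserre_B_Bs q0 q_root (fun=> erefl) (fun=> erefl) A_ord As_ord a0 as0
    U_full U_dir Ud_full Ud_dir B_U Bs_Ud.
- exact: qserre_Bs_B q0 q_root (fun=> erefl) (fun=> erefl) A_ord As_ord a0 as0
    U_full U_dir Ud_full Ud_dir B_U Bs_Ud.
Qed.
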